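(* Let $L$ be an $R_0$-algebra and $k\in[0,1)$. Every $(\in,\in\vee q_k)$-fuzzy fated filter $\mu$ of $L$ satisfies, for all $x,y,z\in L$: (1) $\mu(x\to z)\ge\min\{\mu(x\to(y\to z)),\mu(x\to y),\tfrac{1-k}{2}\}$; (2) $\mu(x)\ge\min\{\mu((x\to y)\to x),\tfrac{1-k}{2}\}$.
   Context: An $R_0$-algebra is a bounded distributive lattice $(L,\wedge,\vee,0,1)$ with an order-reversing involution $\neg$ and a binary operation $\to$ such that for all $x,y,z\in L$: $x\to y=\neg y\to\neg x$; $1\to x=x$; $(y\to z)\wedge((x\to y)\to(x\to z))=y\to z$; $x\to(y\to z)=y\to(x\to z)$; $x\to(y\vee z)=(x\to y)\vee(x\to z)$; $(x\to y)\vee((x\to y)\to(\neg x\vee y))=1$. For $x\in L$, $t\in(0,1]$ and a fuzzy subset $\mu:L\to[0,1]$: $x_t\in\mu$ iff $\mu(x)\ge t$; $x_t\,q_k\,\mu$ iff $\mu(x)+t+k>1$; $x_t\in\vee q_k\,\mu$ iff $x_t\in\mu$ or $x_t\,q_k\,\mu$. $\mu$ is an $(\in,\in\vee q_k)$-fuzzy fated filter of $L$ if (i) for all $x\in L$, $t\in(0,1]$: $x_t\in\mu\Rightarrow 1_t\in\vee q_k\,\mu$; and (ii) for all $x,a,y\in L$, $t,s\in(0,1]$: if $(a\to((x\to y)\to x))_t\in\mu$ and $a_s\in\mu$ then $x_{\min\{t,s\}}\in\vee q_k\,\mu$. *)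

From Stdlib Require Import Reals.
Open Scope R_scope.

Record R0_algebra := {
  carrier :> Type;
  meet : carrier -> carrier -> carrier;
  join : carrier -> carrier -> carrier;
  bot : carrier;
  top : carrier;
  neg : carrier -> carrier;
  imp : carrier -> carrier -> carrier;
  meetC : forall x y, meet x y = meet y x;
  joinC : forall x y, join x y = join y x;
  meetA : forall x y z, meet x (meet y z) = meet (meet x y) z;
  joinA : forall x y z, join x (join y z) = join (join x y) z;
  meet_absorb : forall x y, meet x (join x y) = x;
  join_absorb : forall x y, join x (meet x y) = x;
  meet_joinDl : forall x y z, meet x (join y z) = join (meet x y) (meet x z);
  join_bot : forall x, join x bot = x;
  meet_top : forall x, meet x top = x;
  (* order-reversing involution (x <= y iff meet x y = x) *)
  negK : forall x, neg (neg x) = x;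
  neg_antitone : forall x y, meet x y = x -> meet (neg y) (neg x) = neg y;
  R0_1 : forall x y, imp x y = imp (neg y) (neg x);
  R0_2 : forall x, imp top x = x;
  R0_3 : forall x y z, meet (imp y z) (imp (imp x y) (imp x z)) = imp y z;
  R0_4 : forall x y z, imp x (imp y z) = imp y (imp x z);
  R0_5 : forall x y z, imp x (join y z) = join (imp x y) (imp x z);
  R0_6 : forall x y, join (imp x y) (imp (imp x y) (join (neg x) y)) = top
}.

Arguments top {r}.
Arguments imp {r}.

Definition fin {L : R0_algebra} (mu : L -> R) (x : L) (t : R) : Prop := mu x >= t.
Definition fq (k : R) {L : R0_algebra} (mu : L -> R) (x : L) (t : R) : Prop :=
  mu x + t + k > 1.
Definition fin_or_q (k : R) {L : R0_algebra} (mu : L -> R) (x : L) (t : R) : Prop :=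
  fin mu x t \/ fq k mu x t.

Definition fuzzy_subset {L : R0_algebra} (mu : L -> R) : Prop :=
  forall x, 0 <= mu x <= 1.

Definition in_inqk_fuzzy_fated_filter (k : R) (L : R0_algebra) (mu : L -> R) : Prop :=
  fuzzy_subset mu /\
  (forall (x : L) (t : R), 0 < t <= 1 -> fin mu x t -> fin_or_q k mu top t) /\
  (forall (x a y : L) (t s : R), 0 < t <= 1 -> 0 < s <= 1 ->
     fin mu (imp a (imp (imp x y) x)) t -> fin mu a s ->
     fin_or_q k mu x (Rmin t s)).

(* Cut at a level t <= (1-k)/2, condition (i) puts top into every nonempty
   level set {v | mu v >= t} and condition (ii) says that each level set is closed under the
   fated rule (a, a -> ((x -> y) -> x)) |- x: with a := top this is the law
   ((x -> y) -> x) |- x, and with y := x (x -> x = top) it is modus ponens. Since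
   u <= v gives u -> v = top, level sets are upward closed. Then
   x -> (y -> z) <= (x -> y) -> (x -> (x -> z)) yields x -> (x -> z), which
   lies below x -> (((x -> z) -> z) -> z) = ((x -> z) -> z) -> (x -> z), and the
   law above contracts this to x -> z. Both parts
   of the theorem follow by letting t run up to the right-hand minima. *)

From Pilot Require Import Defs.
From Stdlib Require Import Reals Lra.
Open Scope R_scope.

Definition R0_le {L : R0_algebra} (a b : L) : Prop := meet L a b = a.

Section R0AlgebraFacts.
Variable L : R0_algebra.

Lemma join_eq_of_le (a b : L) : R0_le a b -> join L a b = b.
Proof.
  unfold R0_le. intro Hab. rewrite <- Hab at 1.
  rewrite joinC, meetC. apply join_absorb.
Qed.

Lemma le_of_join_eq (a b : L) : join L a b = b -> R0_le a b.
Proof. intro Hab. unfold R0_le. rewrite <- Hab. apply meet_absorb. Qed.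

Lemma imp_le2 (x y z : L) : R0_le y z -> R0_le (imp x y) (imp x z).
Proof.
  intro Hyz. apply le_of_join_eq.
  rewrite <- R0_5, join_eq_of_le by exact Hyz. reflexivity.
Qed.

Lemma bot_le (y : L) : R0_le (bot L) y.
Proof.
  pose proof (meet_absorb L (bot L) y) as H.
  rewrite joinC, join_bot in H. exact H.
Qed.

Lemma neg_bot : Defs.neg L (bot L) = top.
Proof.
  pose proof (neg_antitone L (bot L) (Defs.neg L top) (bot_le _)) as H.
  rewrite negK, meetC, meet_top in H. exact H.
Qed.

Lemma neg_top : Defs.neg L top = bot L.
Proof. rewrite <- neg_bot, negK. reflexivity. Qed.

Lemma imp_bot (y : L) : imp y (bot L) = Defs.neg L y.
Proof. rewrite R0_1, neg_bot, R0_2. reflexivity. Qed.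

Lemma le_imp_refl (y : L) : R0_le y (imp y y).
Proof.
  rewrite (R0_1 L y y).
  pose proof (imp_le2 (Defs.neg L y) (bot L) (Defs.neg L y) (bot_le _)) as H.
  rewrite imp_bot, negK in H. exact H.
Qed.

(* Axiom R0_6 at x := top reads y \/ (y -> y) = top. *)
Lemma imp_refl (y : L) : imp y y = top.
Proof.
  pose proof (R0_6 L top y) as H.
  rewrite R0_2, neg_top, (joinC L (bot L) y), join_bot in H.
  rewrite join_eq_of_le in H by apply le_imp_refl. exact H.
Qed.

Lemma imp_top_of_le (a b : L) : R0_le a b -> imp a b = top.
Proof.
  intro Hab. pose proof (imp_le2 a a b Hab) as H.
  unfold R0_le in H. rewrite imp_refl, meetC, meet_top in H. exact H.
Qed.

Lemma top_le_eq (p : L) : R0_le top p -> p = top.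
Proof. unfold R0_le. rewrite meetC, meet_top. trivial. Qed.

Lemma imp_imp_le (x y z : L) :
  R0_le (imp x (imp y z)) (imp (imp x y) (imp x (imp x z))).
Proof. rewrite (R0_4 L (imp x y) x (imp x z)). apply imp_le2, R0_3. Qed.

Lemma imp_contract_top (x z : L) :
  imp (imp x (imp x z)) (imp x (imp (imp (imp x z) z) z)) = top.
Proof.
  apply top_le_eq. pose proof (R0_3 L x (imp x z) (imp (imp (imp x z) z) z)) as H.
  rewrite (R0_4 L (imp x z) (imp (imp x z) z) z), imp_refl in H. exact H.
Qed.

End R0AlgebraFacts.

Section FatedFilterLevels.
Variables (L : R0_algebra) (k : R) (mu : L -> R).
Hypothesis Hk : 0 <= k.
Hypothesis Hfilter : in_inqk_fuzzy_fated_filter k L mu.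
Variable t : R.
Hypothesis Ht : 0 < t <= (1 - k) / 2.

(* Below the level (1 - k) / 2 the alternative "q_k" collapses into "\in":
   mu v + t + k > 1 with 2 t <= 1 - k forces mu v > t. *)
Lemma fin_of_fin_or_q (v : L) : fin_or_q k mu v t -> mu v >= t.
Proof. unfold fin_or_q, fin, fq. intros [Hin | Hq]; lra. Qed.

Lemma level_top (w : L) : mu w >= t -> mu top >= t.
Proof.
  intro Hw. destruct Hfilter as [_ [Htop _]].
  apply fin_of_fin_or_q. exact (Htop w t ltac:(lra) Hw).
Qed.

Lemma level_fated (a x y : L) :
  mu (imp a (imp (imp x y) x)) >= t -> mu a >= t -> mu x >= t.
Proof.
  intros Hax Ha. destruct Hfilter as [_ [_ Hfated]].
  apply fin_of_fin_or_q. rewrite <- (Rmin_left t t (Rle_refl t)).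
  exact (Hfated x a y t t ltac:(lra) ltac:(lra) Hax Ha).
Qed.

Lemma level_MP (a b : L) : mu (imp a b) >= t -> mu a >= t -> mu b >= t.
Proof.
  intros Hab Ha. apply (level_fated a b b); [| exact Ha].
  rewrite imp_refl, R0_2. exact Hab.
Qed.

Lemma level_peirce (x y : L) : mu (imp (imp x y) x) >= t -> mu x >= t.
Proof.
  intro Hxy. apply (level_fated top x y).
  - rewrite R0_2. exact Hxy.
  - exact (level_top _ Hxy).
Qed.

Lemma level_le (p q : L) : R0_le p q -> mu p >= t -> mu q >= t.
Proof.
  intros Hpq Hp. apply (level_MP p q); [| exact Hp].
  rewrite imp_top_of_le by exact Hpq. exact (level_top p Hp).
Qed.

Lemma level_imp_contract (x z : L) : mu (imp x (imp x z)) >= t -> mu (imp x z) >= t.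
Proof.
  intro Hxxz. apply (level_peirce (imp x z) z).
  rewrite <- (R0_4 L x (imp (imp x z) z) z).
  apply (level_MP (imp x (imp x z))); [| exact Hxxz].
  rewrite imp_contract_top. exact (level_top _ Hxxz).
Qed.

Lemma level_imp_trans (x y z : L) :
  mu (imp x (imp y z)) >= t -> mu (imp x y) >= t -> mu (imp x z) >= t.
Proof.
  intros Hxyz Hxy. apply level_imp_contract.
  apply (level_MP (imp x y)); [| exact Hxy].
  exact (level_le _ _ (imp_imp_le L x y z) Hxyz).
Qed.

End FatedFilterLevels.

Lemma Rge_Rmin_of_levels (m v c : R) : 0 <= v ->
  (forall t, 0 < t <= c -> m >= t -> v >= t) -> v >= Rmin m c.
Proof.
  intros Hv Hlevels. set (t := Rmin m c).
  destruct (Rle_or_lt t 0) as [Ht0 | Ht0]; [lra |].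
  apply Hlevels.
  - split; [exact Ht0 | apply Rmin_r].
  - apply Rle_ge, Rmin_l.
Qed.

Theorem proposition3p16 (L : R0_algebra) (k : R) (mu : L -> R) :
  0 <= k < 1 ->
  in_inqk_fuzzy_fated_filter k L mu ->
  forall x y z : L,
    mu (imp x z) >= Rmin (Rmin (mu (imp x (imp y z))) (mu (imp x y))) ((1 - k) / 2) /\
    mu x >= Rmin (mu (imp (imp x y) x)) ((1 - k) / 2).
Proof.
  intros [Hk _] Hfilter x y z.
  destruct (proj1 Hfilter (imp x z)) as [Hxz_ge0 _].
  destruct (proj1 Hfilter x) as [Hx_ge0 _].
  split; apply Rge_Rmin_of_levels; try assumption; intros t Ht Hm.
  - pose proof (Rmin_l (mu (imp x (imp y z))) (mu (imp x y))).
    pose proof (Rmin_r (mu (imp x (imp y z))) (mu (imp x y))).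
    apply (level_imp_trans L k mu Hk Hfilter t Ht x y z); lra.
  - exact (level_peirce L k mu Hk Hfilter t Ht x y Hm).
Qed.
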